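(* Let $\epsilon>0$ and let $C^*$ be the minimum cost of a valid flow for the generalized network flow instance at time $T$ with all edge capacities $\mu_e$ replaced by $\mu_e/(1+\epsilon)$. Then the final heights produced by the augmenting-path algorithm (run with the original capacities $\mu$) satisfy $\sum_{t=1}^{T}\mathrm{height}_T(s_t)\le\frac{1+\epsilon}{\epsilon}C^*$.
   Context: Generalized network flow instance: digraph $G=(V,E)$ without anti-parallel edges, sources with no incoming edges, sink $\tau$ with no outgoing edges, edge capacities $\mu_e>0$, costs $c_e>0$, gains $\gamma_e>0$; convention: every vertex $v\ne\tau$ has a dummy edge $v\tau$ of infinite capacity, gain $1$ and sufficiently large cost $B$. A valid flow $x\ge0$ satisfies $x_e\le\mu_e$ and $\sum_{e\in\delta^+(v)}x_e-\sum_{e\in\delta^-(v)}\gamma_ex_e=a_v$ for all $v\ne\tau$, where $a_v=1$ for sources and $0$ otherwise; its cost is $\sum_ec_ex_e$. Online: sources $s_1,\dots,s_T$ arrive one at a time with their outgoing edges. Residual graph $G^x$: forward edge $uv$ (capacity $\mu_{uv}-x_{uv}$, cost $c_{uv}$, gain $\gamma_{uv}$) if $x_{uv}<\mu_{uv}$; backward edge $vu$ (capacity $\gamma_{uv}x_{uv}$, cost $0$, gain $1/\gamma_{uv}$) if $x_{uv}>0$. A fractional augmenting path from $s\ne\tau$ in $G^x$ is $f\ge0$ on residual edges with out-minus-gain-weighted-in flow $1$ at $s$ and $0$ at vertices other than $s,\tau$; cost $\sum_ec^x_ef_e$. It is an augmenting path if its support is a path from $s$ to $\tau$, or a cycle through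 $s$ avoiding $\tau$, or a cycle avoiding $s,\tau$ plus a path from $s$ to it internally disjoint from it. Augmenting $x$ by $\theta$ using $f$: $x_{uv}\gets x_{uv}+\theta f_{uv}$ on forward residual edges, $x_{uv}\gets x_{uv}-\theta f_{vu}/\gamma_{uv}$ on backward residual edges $vu$. The augmenting-path algorithm: $x^{(0)}=0$; at time $t$, add $s_t$, start from $x^{(t-1)}$ (zero on new edges), and while the outflow of $s_t$ is less than $1$, augment by the largest feasible $\theta$ (keeping $0\le x_e\le\mu_e$ and outflow of $s_t$ at most $1$) along a cheapest augmenting path from $s_t$ in the current residual graph; the result is $x^{(t)}$. $\mathrm{height}_T(v)$ for $v\ne\tau$ is the minimum cost of an augmenting path from $v$ in $G^{x^{(T)}}$. *)

From HB Require Import structures.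
From mathcomp Require Import all_boot all_order all_algebra.
From mathcomp Require Import reals constructive_ereal.

Set Implicit Arguments.
Unset Strict Implicit.
Unset Printing Implicit Defensive.

Import Order.TTheory GRing.Theory Num.Theory.
Local Open Scope ring_scope.

Record gf_instance (R : realType) := GFInstance {
  gV : finType;
  gE : finType;
  gsrc : gE -> gV;
  gtgt : gE -> gV;
  gsink : gV;
  gcap : gE -> \bar R;
  gcost : gE -> R;
  ggain : gE -> R }.

Section GenFlow.
Variable R : realType.
Variable G : gf_instance R.
(* the sources s_1, ..., s_T, indexed by 'I_T (s i is s_{i+1}) *)
Variable T : nat.
Variable s : 'I_T -> gV G.

Local Notation V := (@gV R G).
Local Notation E := (@gE R G).
Local Notation src := (@gsrc R G).
Local Notation tgt := (@gtgt R G).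
Local Notation tau := (@gsink R G).
Local Notation mu := (@gcap R G).
Local Notation c := (@gcost R G).
Local Notation gam := (@ggain R G).

Definition instance_ok (B : R) : Prop :=
  [/\ (forall e, src e != tau) /\
      (forall e f, ~~ ((src e == tgt f) && (tgt e == src f))),  (* no anti-parallel edges (nor loops) *)
      [/\ injective s, (forall i, s i != tau) & (forall i e, tgt e != s i)],
      (forall e, (0 < mu e)%E /\ 0 < c e /\ 0 < gam e),
      (forall v, v != tau -> exists e,
          [/\ src e = v, tgt e = tau, mu e = +oo%E, gam e = 1 & c e = B])
    & (forall e, mu e = +oo%E -> [/\ tgt e = tau, gam e = 1 & c e = B])].

Definition is_source (v : V) : bool := [exists i, s i == v].
Definition demand (v : V) : R := if is_source v then 1 else 0.

Definition outflow (x : E -> R) (v : V) : R := \sum_(e | src e == v) x e.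
Definition netout (x : E -> R) (v : V) : R :=
  outflow x v - \sum_(e | tgt e == v) gam e * x e.

Definition valid (cap : E -> \bar R) (x : E -> R) : Prop :=
  [/\ (forall e, 0 <= x e), (forall e, ((x e)%:E <= cap e)%E)
    & (forall v, v != tau -> netout x v = demand v)].

Definition flow_cost (x : E -> R) : R := \sum_e c e * x e.

Definition is_min_cost (cap : E -> \bar R) (C : R) : Prop :=
  (exists y, valid cap y /\ flow_cost y = C) /\
  (forall y, valid cap y -> C <= flow_cost y).

Definition scaled_cap (eps : R) (e : E) : \bar R := (mu e * ((1 + eps)^-1)%:E)%E.

(* residual edges: (e, true) forward, (e, false) backward *)
Definition RE := (E * bool)%type.
Definition rsrc (r : RE) : V := if r.2 then src r.1 else tgt r.1.
Definition rtgt (r : RE) : V := if r.2 then tgt r.1 else src r.1.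
Definition rgain (r : RE) : R := if r.2 then gam r.1 else (gam r.1)^-1.
Definition rcost (r : RE) : R := if r.2 then c r.1 else 0.

(* residual edge r exists in the residual graph of the subgraph induced by
   the active vertices [act] (the graph at the current time) w.r.t. flow x *)
Definition present (act : pred V) (x : E -> R) (r : RE) : bool :=
  act (src r.1) &&
  (if r.2 then ((x r.1)%:E < mu r.1)%E else 0 < x r.1).

Definition rnet (f : RE -> R) (w : V) : R :=
  \sum_(r | rsrc r == w) f r - \sum_(r | rtgt r == w) rgain r * f r.

Definition rcost_of (f : RE -> R) : R := \sum_r rcost r * f r.

Fixpoint walk_from (u : V) (p : seq RE) : bool :=
  if p is r :: p' then (rsrc r == u) && walk_from (rtgt r) p' else true.
Definition endpt (u : V) (p : seq RE) : V := last u (map rtgt p).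
Definition simple_path (u w : V) (p : seq RE) : bool :=
  [&& walk_from u p, uniq (u :: map rtgt p) & endpt u p == w].
Definition cycle_at (u : V) (p : seq RE) : bool :=
  [&& p != [::], walk_from u p, endpt u p == u & uniq (map rtgt p)].

Definition support_is (f : RE -> R) (p : seq RE) : Prop :=
  forall r, (0 < f r) = (r \in p).

Definition aug_shape (v : V) (f : RE -> R) : Prop :=
  (exists p, simple_path v tau p /\ support_is f p)
  \/ (exists p, [/\ cycle_at v p, tau \notin map rtgt p & support_is f p])
  \/ (exists q C w, [/\ cycle_at w C, v \notin map rtgt C /\ tau \notin map rtgt C,
        simple_path v w q,
        (forall u, u \in v :: map rtgt q -> u \in map rtgt C -> u = w)
      & support_is f (q ++ C)]).

Definition aug_path (act : pred V) (x : E -> R) (v : V) (f : RE -> R) : Prop :=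
  [/\ v != tau /\ act v, (forall r, 0 <= f r),
      (forall r, ~~ present act x r -> f r = 0),
      (forall w, w != tau -> rnet f w = ((w == v)%:R : R))
    & aug_shape v f].

Definition cheapest (act : pred V) (x : E -> R) (v : V) (f : RE -> R) : Prop :=
  aug_path act x v f /\ (forall g, aug_path act x v g -> rcost_of f <= rcost_of g).

Definition augment (x : E -> R) (f : RE -> R) (th : R) (e : E) : R :=
  x e + th * f (e, true) - th * f (e, false) / gam e.

Definition feasible_th (v : V) (x : E -> R) (f : RE -> R) (th : R) : Prop :=
  [/\ 0 <= th, (forall e, 0 <= augment x f th e),
      (forall e, ((augment x f th e)%:E <= mu e)%E)
    & outflow (augment x f th) v <= 1].

Definition aug_step (act : pred V) (v : V) (x x' : E -> R) : Prop :=
  exists f th, [/\ cheapest act x v f, feasible_th v x f th,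
                   (forall th', feasible_th v x f th' -> th' <= th)
                 & forall e, x' e = augment x f th e].

(* the while loop processing source v *)
Inductive phase (act : pred V) (v : V) : (E -> R) -> (E -> R) -> Prop :=
| phase_done x : ~ (outflow x v < 1) -> phase act v x x
| phase_step x x' y : outflow x v < 1 -> aug_step act v x x' ->
                      phase act v x' y -> phase act v x y.

(* vertices of the graph at time k: non-sources and s_1..s_k *)
Definition active (k : nat) (v : V) : bool :=
  ~~ is_source v || [exists i : 'I_T, (s i == v) && (i < k)%N].

(* X t = x^(t) is a (terminating) run of the augmenting-path algorithm *)
Definition alg_run (X : nat -> E -> R) : Prop :=
  (forall e, X 0%N e = 0) /\
  (forall t : 'I_T, phase (active t.+1) (s t) (X t) (X t.+1)).

(* h = height of v w.r.t. flow x (full graph at time T) *)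
Definition is_height (x : E -> R) (v : V) (h : R) : Prop :=
  (exists f, aug_path predT x v f /\ rcost_of f = h) /\
  (forall f, aug_path predT x v f -> h <= rcost_of f).

End GenFlow.

From HB Require Import structures.
From mathcomp Require Import all_boot all_order all_algebra.
From mathcomp Require Import reals constructive_ereal classical_sets boolp.
From mathcomp Require Import ring zify.

Set Implicit Arguments.
Unset Strict Implicit.
Unset Printing Implicit Defensive.

Import Order.TTheory GRing.Theory Num.Theory.
Local Open Scope ring_scope.

(* Let x be the final flow and y an optimal flow for the capacities mu/(1+eps).
   The potential pi(v) of v is the infimum, over residual walks of x from v to
   the sink, of their gain-weighted cost.  A walk that is not a simple path
   contains a cycle: if the cycle has gain >= 1 it can be cut out, otherwise
   the cost of the walk is a convex combination of the costs of a lasso (an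
   augmenting path) and of a shorter walk; hence every height is at most the
   potential.  The potential is dual feasible, pi(u) <= c_r + gamma_r pi(w) on
   each residual edge r, and y - x/(1+eps) splits into a nonnegative residual
   flow of x that sends eps/(1+eps) units out of every source at cost at most
   C*; weak duality gives eps/(1+eps) * sum_t pi(s_t) <= C*. *)

Lemma sumr_delta (R : nmodType) (I : finType) (P : pred I) (F : I -> R) (i : I) :
  \sum_(j | P j) F j *+ (i == j) = F i *+ P i.
Proof.
rewrite big_mkcond (bigD1 i) //= eqxx mulr1n big1 ?addr0; first by case: (P i).
by move=> j /negbTE ji; rewrite eq_sym ji mulr0n; case: (P j).
Qed.

Lemma sumr_mkcond_mulrn (R : nmodType) (I : finType) (P : pred I) (F : I -> R) :
  \sum_(i | P i) F i = \sum_i F i *+ P i.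
Proof. by rewrite big_mkcond; apply: eq_bigr => i _; rewrite mulrb. Qed.

Lemma sum_over_fibers (R : nmodType) (I J : finType) (h : I -> J) (F : J -> I -> R) :
  \sum_j \sum_(i | h i == j) F j i = \sum_i F (h i) i.
Proof.
rewrite (exchange_big_dep xpredT) //=; apply: eq_bigr => i _.
by rewrite (big_pred1 (h i)) // => j; rewrite /= eq_sym.
Qed.

Section GeneralizedFlowDuality.
Variable R : realType.
Variable G : gf_instance R.
Local Notation V := (gV G).
Local Notation E := (gE G).
Local Notation tau := (gsink G).
Local Notation RE := (RE G).
Local Notation tg := (@rtgt R G).
Hypothesis gain_gt0 : forall e : E, 0 < ggain e.
Hypothesis cost_gt0 : forall e : E, 0 < gcost e.
Hypothesis sink_reachable : forall v, v != tau ->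
  exists e : E, [/\ gsrc e = v, gtgt e = tau & gcap e = +oo%E].

Lemma rgain_gt0 (r : RE) : 0 < rgain r.
Proof. by case: r => e [|]; rewrite /rgain /= ?invr_gt0. Qed.

Lemma rcost_ge0 (r : RE) : 0 <= rcost r.
Proof. by case: r => e [|]; rewrite /rcost //= ltW. Qed.

Lemma rnet_add_scale (f g : RE -> R) (b : R) (w : V) :
  rnet (fun r => f r + b * g r) w = rnet f w + b * rnet g w.
Proof.
rewrite /rnet big_split -mulr_sumr /=.
under [X in _ - X]eq_bigr do rewrite mulrDr mulrCA.
by rewrite big_split -!mulr_sumr /=; ring.
Qed.

Lemma rcost_of_add_scale (f g : RE -> R) (b : R) :
  rcost_of (fun r => f r + b * g r) = rcost_of f + b * rcost_of g.
Proof. by rewrite /rcost_of mulr_sumr -big_split; apply: eq_bigr => r _ /=; ring. Qed.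

Lemma rnet_unit (r : RE) (w : V) :
  rnet (fun r' => (r == r')%:R) w = (rsrc r == w)%:R - rgain r * (rtgt r == w)%:R.
Proof.
rewrite /rnet (sumr_delta (fun r1 => rsrc r1 == w) (fun=> 1)).
by under eq_bigr do rewrite mulr_natr; rewrite sumr_delta mulr_natr.
Qed.

Lemma rcost_of_unit (r : RE) : rcost_of (fun r' => (r == r')%:R) = rcost r.
Proof.
by rewrite /rcost_of; under eq_bigr do rewrite mulr_natr; rewrite sumr_delta.
Qed.

Fixpoint walk_flow (p : seq RE) : RE -> R :=
  if p is r :: p' then fun r' => (r == r')%:R + rgain r * walk_flow p' r'
  else fun=> 0.

Definition walk_gain (p : seq RE) : R := \prod_(r <- p) rgain r.

Lemma walk_gain_cons r p : walk_gain (r :: p) = rgain r * walk_gain p.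
Proof. exact: big_cons. Qed.

Lemma walk_gain_gt0 p : 0 < walk_gain p.
Proof. by apply: prodr_gt0 => r _; apply: rgain_gt0. Qed.

Lemma walk_flow_cat p q r :
  walk_flow (p ++ q) r = walk_flow p r + walk_gain p * walk_flow q r.
Proof.
elim: p => [|r' p IH] /=; first by rewrite /walk_gain big_nil mul1r add0r.
by rewrite IH walk_gain_cons; ring.
Qed.

Lemma walk_flow_ge0 p r : 0 <= walk_flow p r.
Proof.
elim: p => [|r' p IH] //=.
by rewrite addr_ge0 ?ler0n // mulr_ge0 // ltW // rgain_gt0.
Qed.

Lemma walk_flow_gt0 p r : (0 < walk_flow p r) = (r \in p).
Proof.
elim: p => [|r' p IH] /=; first by rewrite ltxx.
rewrite in_cons eq_sym; case: eqP => [->|_] /=.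
  by rewrite ltr_wpDr // mulr_ge0 ?walk_flow_ge0 // ltW // rgain_gt0.
by rewrite add0r pmulr_rgt0 ?rgain_gt0.
Qed.

Lemma walk_flow_eq0 p r : r \notin p -> walk_flow p r = 0.
Proof.
by move=> rNp; apply/eqP; rewrite eq_le walk_flow_ge0 andbT leNgt walk_flow_gt0.
Qed.

Lemma support_walk_flow p : support_is (walk_flow p) p.
Proof. by move=> r; rewrite walk_flow_gt0. Qed.

Lemma endpt_cat (u : V) (p q : seq RE) : endpt u (p ++ q) = endpt (endpt u p) q.
Proof. by rewrite /endpt map_cat last_cat. Qed.

Lemma rnet_walk_flow (u : V) p w : walk_from u p ->
  rnet (walk_flow p) w = (u == w)%:R - walk_gain p * (endpt u p == w)%:R.
Proof.
elim: p u => [|r p IH] u /=.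
  by rewrite /walk_gain big_nil mul1r subrr /rnet !big1 ?subr0 // => r _; rewrite mulr0.
case/andP => /eqP <- /IH {}IH.
rewrite rnet_add_scale rnet_unit IH walk_gain_cons [endpt _ _]/endpt /=.
by ring.
Qed.

Lemma rcost_of_walk_flow_cons r p :
  rcost_of (walk_flow (r :: p)) = rcost r + rgain r * rcost_of (walk_flow p).
Proof. by rewrite /= rcost_of_add_scale rcost_of_unit. Qed.

Lemma rcost_of_walk_flow_cat p q :
  rcost_of (walk_flow (p ++ q)) =
    rcost_of (walk_flow p) + walk_gain p * rcost_of (walk_flow q).
Proof.
by rewrite -rcost_of_add_scale; apply: eq_bigr => r _; rewrite walk_flow_cat.
Qed.

Lemma rcost_of_walk_flow_ge0 p : 0 <= rcost_of (walk_flow p).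
Proof. by apply: sumr_ge0 => r _; rewrite mulr_ge0 ?rcost_ge0 ?walk_flow_ge0. Qed.

Lemma endpt_mem (u : V) (p : seq RE) : endpt u p \in u :: map tg p.
Proof. exact: mem_last. Qed.

Lemma split_at_vertex (u z : V) (p : seq RE) : z \in u :: map tg p ->
  exists p1 p2, p = p1 ++ p2 /\ endpt u p1 = z.
Proof.
elim: p u => [|r p IH] u; first by rewrite inE => /eqP ->; exists [::], [::].
rewrite in_cons => /orP [/eqP ->|]; first by exists [::], (r :: p).
by move/IH => [p1 [p2 [-> <-]]]; exists (r :: p1), p2.
Qed.

Definition lasso (u : V) (p c : seq RE) : Prop :=
  [/\ c != [::], endpt (endpt u p) c = endpt u p, uniq (u :: map tg p),
      uniq (map tg c)
    & forall z, z \in u :: map tg p -> z \in map tg c -> z = endpt u p].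

Lemma uniq_or_lasso (u : V) (p : seq RE) :
  uniq (u :: map tg p) \/ exists p1 c p2, p = p1 ++ c ++ p2 /\ lasso u p1 c.
Proof.
elim/last_ind: p => [|p r IH]; first by left.
case: IH => [Hu|[p1 [c [p2 [-> Hl]]]]]; last first.
  by right; exists p1, c, (rcons p2 r); rewrite -!rcons_cat.
rewrite map_rcons -rcons_cons rcons_uniq Hu andbT.
have [Hz|] := boolP (tg r \in u :: map tg p); last by left.
right; have [p1 [c [Ep Ez]]] := split_at_vertex Hz.
move: Hu; rewrite Ep map_cat -cat_cons cat_uniq => /and3P [Hu1 Hdisj Huc].
exists p1, (rcons c r), [::]; split; first by rewrite cats0 rcons_cat.
split => //.
- by rewrite -size_eq0 size_rcons.
- by rewrite /endpt map_rcons last_rcons -/(endpt u p1) Ez.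
- rewrite map_rcons rcons_uniq Huc andbT; apply: contra Hdisj => Hc.
  by apply/hasP; exists (tg r) => //; rewrite -Ez endpt_mem.
- move=> z Hz1; rewrite map_rcons mem_rcons in_cons => /orP [/eqP -> //|Hz2].
  by move/hasP: Hdisj; case; exists z.
Qed.

Section ResidualWalks.
Variable x : E -> R.

(* Residual walks of x stop at the sink, where conservation is not imposed. *)
Fixpoint res_walk (u : V) (p : seq RE) : bool :=
  if p is r :: p' then
    [&& u != tau, rsrc r == u, present predT x r & res_walk (rtgt r) p']
  else true.

Lemma res_walk_cat (u : V) (p q : seq RE) :
  res_walk u (p ++ q) = res_walk u p && res_walk (endpt u p) q.
Proof. by elim: p u => [|r p IH] u //=; rewrite IH !andbA. Qed.

Lemma res_walk_walk_from (u : V) (p : seq RE) : res_walk u p -> walk_from u p.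
Proof. by elim: p u => [|r p IH] u //= /and4P [_ -> _ /IH]. Qed.

Lemma res_walk_present (u : V) (p : seq RE) r :
  res_walk u p -> r \in p -> present predT x r.
Proof.
elim: p u => [|r' p IH] u //= /and4P [_ _ Hr' Hp].
by rewrite in_cons => /orP [/eqP ->|/(IH _ Hp)].
Qed.

Lemma res_walk_start_neq_sink (u : V) (p : seq RE) :
  res_walk u p -> p != [::] -> u != tau.
Proof. by case: p => [|r p] //= /and4P []. Qed.

Lemma res_walk_sink_endpt (u : V) (p : seq RE) :
  res_walk u p -> tau \in map tg p -> endpt u p = tau.
Proof.
elim: p u => [|r p IH] u //= /and4P [_ _ _ Hp].
rewrite in_cons => /orP [/eqP Er|/(IH _ Hp) //].
by case: p {IH} Hp => [|r' p] //= /and4P []; rewrite Er eqxx.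
Qed.

Lemma aug_path_simple_walk (v : V) (p : seq RE) :
  v != tau -> res_walk v p -> endpt v p = tau -> uniq (v :: map tg p) ->
  aug_path predT x v (walk_flow p).
Proof.
move=> vNt Hp Hend Hu; split => //.
- exact: walk_flow_ge0.
- by move=> r Hr; apply: walk_flow_eq0; apply: contra Hr; exact: res_walk_present Hp.
- move=> w wNt; rewrite (rnet_walk_flow _ (res_walk_walk_from Hp)) Hend.
  by rewrite [tau == w]eq_sym (negbTE wNt) mulr0 subr0 eq_sym.
left; exists p; split; last exact: support_walk_flow.
by rewrite /simple_path res_walk_walk_from // Hu Hend eqxx.
Qed.

Lemma aug_path_lasso (v : V) (p c : seq RE) :
  v != tau -> res_walk v (p ++ c) -> lasso v p c -> walk_gain c < 1 ->
  aug_path predT x v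
    (fun r => walk_flow p r + walk_gain p / (1 - walk_gain c) * walk_flow c r).
Proof.
set y := endpt v p; set k := _ / _ => vNt Hw [cN0 Hy Hup Huc Hpc] c_lt1.
move: (Hw); rewrite res_walk_cat -/y => /andP [Hp Hc].
rewrite -/y in Hy Hpc.
have k_gt0 : 0 < k by rewrite divr_gt0 ?walk_gain_gt0 // subr_gt0.
have yNt : y != tau := res_walk_start_neq_sink Hc cN0.
have tauNc : tau \notin map tg c.
  by apply: contra yNt => /(res_walk_sink_endpt Hc); rewrite Hy => ->.
have supp : support_is (fun r => walk_flow p r + k * walk_flow c r) (p ++ c).
  move=> r; rewrite mem_cat -!walk_flow_gt0.
  have [fp_gt0|fp_le0] := ltrP 0 (walk_flow p r).
    by rewrite ltr_wpDr // mulr_ge0 ?walk_flow_ge0 ?ltW.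
  have -> : walk_flow p r = 0 by apply/le_anti; rewrite fp_le0 walk_flow_ge0.
  by rewrite add0r pmulr_rgt0.
split.
- by split.
- by move=> r; rewrite addr_ge0 ?walk_flow_ge0 // mulr_ge0 ?walk_flow_ge0 ?(ltW k_gt0).
- move=> r /(contra (res_walk_present Hw)); rewrite mem_cat negb_or => /andP [rNp rNc].
  by rewrite !walk_flow_eq0 ?mulr0 ?addr0.
- move=> w _; rewrite rnet_add_scale (rnet_walk_flow _ (res_walk_walk_from Hp)).
  rewrite (rnet_walk_flow _ (res_walk_walk_from Hc)) Hy [v == w]eq_sym /k.
  by field; rewrite subr_eq0 eq_sym lt_eqF.
have [p0|pN0] := eqVneq p [::].
  have yv : y = v by rewrite /y p0.
  right; left; exists c; split; last by move: supp; rewrite p0.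
  - by rewrite /cycle_at -yv cN0 res_walk_walk_from // Hy eqxx.
  - exact: tauNc.
have vNc : v \notin map tg c.
  case/andP: Hup => vNp _; apply: contra vNp => /(Hpc v (mem_head _ _)) ->.
  by rewrite /y; case: (p) pN0 => // r p' _; rewrite /endpt /=; exact: mem_last.
right; right; exists p, c, y; split => //.
- by rewrite /cycle_at cN0 res_walk_walk_from // Hy eqxx.
- by rewrite /simple_path res_walk_walk_from // Hup eqxx.
Qed.

Lemma aug_lb_le_walk_cost (v : V) (H : R) : v != tau ->
  (forall f, aug_path predT x v f -> H <= rcost_of f) ->
  forall p, res_walk v p -> endpt v p = tau -> H <= rcost_of (walk_flow p).
Proof.
move=> vNt Hlb p; have [n] := ubnP (size p); elim: n p => // n IH p.
have [Hu _ Hw He|[p1 [c [p2 [-> Hl]]]]] := uniq_or_lasso v p.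
  exact/Hlb/aug_path_simple_walk.
have [cN0 Hc _ _ _] := Hl; rewrite ltnS !size_cat => size_lt.
rewrite !res_walk_cat !endpt_cat Hc => /and3P [Hw1 Hwc Hw2] He.
have H12 : H <= rcost_of (walk_flow (p1 ++ p2)).
  apply: IH; rewrite ?res_walk_cat ?Hw1 ?endpt_cat //.
  have : (0 < size c)%N by rewrite lt0n size_eq0.
  by rewrite size_cat; lia.
rewrite !rcost_of_walk_flow_cat in H12 *.
have gp_gt0 := walk_gain_gt0 p1; have gc_gt0 := walk_gain_gt0 c.
have [c_ge1|c_lt1] := lerP 1 (walk_gain c).
  apply: (le_trans H12); rewrite lerD2l ler_wpM2l ?(ltW gp_gt0) //.
  by rewrite ler_wpDl ?ler_peMl ?rcost_of_walk_flow_ge0.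
have Hw1c : res_walk v (p1 ++ c) by rewrite res_walk_cat Hw1 Hwc.
have := Hlb _ (aug_path_lasso vNt Hw1c Hl c_lt1); rewrite rcost_of_add_scale.
set k := _ / _ => HL.
set a1 := rcost_of (walk_flow p1) in HL H12 *.
set ac := rcost_of (walk_flow c) in HL *; set a2 := rcost_of (walk_flow p2) in H12 *.
have -> : a1 + walk_gain p1 * (ac + walk_gain c * a2) =
    (1 - walk_gain c) * (a1 + k * ac) + walk_gain c * (a1 + walk_gain p1 * a2).
  by rewrite /k; field; rewrite subr_eq0 eq_sym lt_eqF.
have c_ge0 : 0 <= 1 - walk_gain c by rewrite subr_ge0 ltW.
have := lerD (ler_wpM2l c_ge0 HL) (ler_wpM2l (ltW gc_gt0) H12).
by rewrite -mulrDl subrK mul1r.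
Qed.

Local Open Scope classical_set_scope.

Definition walk_costs (v : V) : set R :=
  [set rcost_of (walk_flow p) | p in [set p | res_walk v p /\ endpt v p = tau]].

Definition potential (v : V) : R := inf (walk_costs v).

Lemma walk_costs_ge0 (v : V) : lbound (walk_costs v) 0.
Proof. by move=> _ [p _ <-]; apply: rcost_of_walk_flow_ge0. Qed.

Lemma walk_costs_neq0 (v : V) : walk_costs v !=set0.
Proof.
have [->|vNt] := eqVneq v tau; first by exists (rcost_of (walk_flow [::])), [::].
have [e [Ev e_tau e_inf]] := sink_reachable vNt; subst v.
exists (rcost_of (walk_flow [:: (e, true)])), [:: (e, true)] => //.
split; last exact: e_tau.
by rewrite /= vNt /rsrc eqxx /present /= e_inf ltry.
Qed.

Lemma potential_ge0 (v : V) : 0 <= potential v.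
Proof. by apply: lb_le_inf; [apply: walk_costs_neq0|apply: walk_costs_ge0]. Qed.

Lemma potential_le_walk_cost (v : V) (p : seq RE) :
  res_walk v p -> endpt v p = tau -> potential v <= rcost_of (walk_flow p).
Proof.
by move=> Hp Hend; apply: ge_inf; [exists 0; apply: walk_costs_ge0|exists p].
Qed.

Lemma potential_sink : potential tau = 0.
Proof.
apply/le_anti; rewrite potential_ge0 andbT.
have -> : 0 = rcost_of (walk_flow [::]).
  by rewrite /rcost_of big1 // => r _; rewrite mulr0.
exact: potential_le_walk_cost.
Qed.

Lemma potential_dual (r : RE) : present predT x r ->
  potential (rsrc r) <= rcost r + rgain r * potential (rtgt r).
Proof.
move=> Hr; have [->|srcNt] := eqVneq (rsrc r) tau.
  rewrite potential_sink addr_ge0 ?rcost_ge0 //.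
  by rewrite mulr_ge0 ?potential_ge0 ?ltW ?rgain_gt0.
have g_gt0 := rgain_gt0 r.
rewrite -lerBlDl -ler_pdivrMl //; apply: lb_le_inf; first exact: walk_costs_neq0.
move=> _ [p [Hp Hend] <-]; rewrite ler_pdivrMl // lerBlDl.
rewrite -rcost_of_walk_flow_cons; apply: potential_le_walk_cost => //=.
by rewrite srcNt eqxx Hr.
Qed.

Lemma aug_lb_le_potential (v : V) (H : R) : v != tau ->
  (forall f, aug_path predT x v f -> H <= rcost_of f) -> H <= potential v.
Proof.
move=> vNt Hlb; apply: lb_le_inf; first exact: walk_costs_neq0.
by move=> _ [p [Hp Hend] <-]; apply: aug_lb_le_walk_cost vNt Hlb p Hp Hend.
Qed.

Lemma potential_weak_duality (g : RE -> R) :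
  (forall r, 0 <= g r) -> (forall r, 0 < g r -> present predT x r) ->
  \sum_w potential w * rnet g w <= rcost_of g.
Proof.
move=> g_ge0 g_present.
have -> : \sum_w potential w * rnet g w =
    \sum_r g r * (potential (rsrc r) - rgain r * potential (rtgt r)).
  rewrite /rnet; under eq_bigr do rewrite mulrBr !mulr_sumr.
  rewrite sumrB !sum_over_fibers -sumrB.
  by apply: eq_bigr => r _; ring.
rewrite /rcost_of; apply: ler_sum => r _; rewrite [rcost r * _]mulrC.
have [->|g_gt0] := eqVneq (g r) 0; first by rewrite !mul0r.
rewrite ler_wpM2l ?g_ge0 // lerBlDr; apply: potential_dual.
by apply: g_present; rewrite lt_def g_gt0 g_ge0.
Qed.

End ResidualWalks.

Local Notation src := (@gsrc R G).
Local Notation tgt := (@gtgt R G).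
Local Notation gam := (@ggain R G).

Lemma sum_residual (F : RE -> R) : \sum_r F r = \sum_e (F (e, true) + F (e, false)).
Proof.
transitivity (\sum_(p : E * bool) F (p.1, p.2)); first by apply: eq_bigr; case.
rewrite -(pair_bigA _ (fun e b => F (e, b))).
by apply: eq_bigr => e _; rewrite big_bool.
Qed.

Lemma netoutE (z : E -> R) (w : V) :
  netout z w = \sum_e (z e *+ (src e == w) - (gam e * z e) *+ (tgt e == w)).
Proof.
rewrite /netout /outflow (sumr_mkcond_mulrn (fun e => src e == w)).
by rewrite (sumr_mkcond_mulrn (fun e => tgt e == w)) -sumrB.
Qed.

Lemma rnetE (f : RE -> R) (w : V) :
  rnet f w = \sum_e (f (e, true) *+ (src e == w) + f (e, false) *+ (tgt e == w)
    - (gam e * f (e, true)) *+ (tgt e == w)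
    - ((gam e)^-1 * f (e, false)) *+ (src e == w)).
Proof.
rewrite /rnet (sumr_mkcond_mulrn (fun r => rsrc r == w)).
rewrite (sumr_mkcond_mulrn (fun r => rtgt r == w)) !sum_residual -sumrB.
by apply: eq_bigr => e _; rewrite /rgain /=; ring.
Qed.

Lemma netout_sub_scale (f g : E -> R) (b : R) (w : V) :
  netout (fun e => f e - b * g e) w = netout f w - b * netout g w.
Proof.
by rewrite !netoutE mulr_sumr -sumrB; apply: eq_bigr => e _; rewrite !mulrnBl; ring.
Qed.

Lemma netout_augment (x : E -> R) (f : RE -> R) (th : R) (w : V) :
  netout (augment x f th) w = netout x w + th * rnet f w.
Proof.
rewrite !netoutE rnetE mulr_sumr -big_split; apply: eq_bigr => e _ /=.
by rewrite /augment; field; rewrite gt_eqF.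
Qed.

(* The positive part of D on forward edges and its negative part on backward
   edges, rescaled by the gain since backward edges have gain 1/gamma. *)
Definition res_split (D : E -> R) (r : RE) : R :=
  if r.2 then (if 0 <= D r.1 then D r.1 else 0)
  else gam r.1 * (if 0 <= D r.1 then 0 else - D r.1).

Lemma res_split_ge0 (D : E -> R) (r : RE) : 0 <= res_split D r.
Proof.
rewrite /res_split; case: r => e [] /=; case: (lerP 0 (D e)) => HD; rewrite ?mulr0 //.
by rewrite mulr_ge0 ?oppr_ge0 ?ltW.
Qed.

Lemma rnet_res_split (D : E -> R) (w : V) : rnet (res_split D) w = netout D w.
Proof.
rewrite rnetE netoutE; apply: eq_bigr => e _; rewrite /res_split /=.
by case: ifP => _; field; rewrite gt_eqF.
Qed.

Lemma res_split_present (x D : E -> R) (r : RE) :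
  (forall e, 0 < D e -> ((x e)%:E < gcap e)%E) -> (forall e, D e < 0 -> 0 < x e) ->
  0 < res_split D r -> present predT x r.
Proof.
move=> D_pos D_neg; rewrite /present /res_split; case: r => e [] /=.
  by case: ifP => [_ /D_pos|]; rewrite ?ltxx.
by case: (lerP 0 (D e)) => [_|/D_neg]; rewrite ?mulr0 ?ltxx.
Qed.

Lemma phase_spec act (v : V) (x y : E -> R) :
  phase act v x y -> (forall e, 0 <= x e) ->
  [/\ forall e, 0 <= y e,
      forall w, w != tau -> w != v -> netout y w = netout x w,
      1 <= outflow y v
    & y = x \/ outflow y v <= 1].
Proof.
elim=> {x y} [x x_done|x x' y _ [f [th [[Hf _] [_ x'_ge0 _ x'_out] _ Ex']]] _ IH] x_ge0.
  by split=> //; [rewrite leNgt; apply/negP|left].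
have {}Ex' : x' = augment x f th by apply/funext.
subst x'; have [y_ge0 y_net y_out1 y_out] := IH x'_ge0.
split=> // [w wNt wNv|]; last by right; case: y_out => [->|].
have [_ _ _ f_net _] := Hf.
by rewrite y_net // netout_augment f_net // (negbTE wNv) mulr0 addr0.
Qed.

Section Run.
Variables (T : nat) (s : 'I_T -> V).
Hypothesis s_inj : injective s.
Hypothesis s_ne_sink : forall t, s t != tau.
Hypothesis s_no_in : forall t e, tgt e != s t.

Definition served (n : nat) (w : V) : bool :=
  [exists t : 'I_T, (t < n)%N && (s t == w)].

Lemma served0 (w : V) : served 0 w = false.
Proof. by apply/existsP => -[]. Qed.

Lemma servedS (t : 'I_T) (w : V) : served t.+1 w = served t w || (s t == w).
Proof.
apply/existsP/orP => [[i /andP []]|[/existsP [i /andP [i_lt Hi]]|/eqP <-]].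
- rewrite ltnS leq_eqVlt => /orP [/eqP/val_inj -> ->|i_lt Hi]; first by right.
  by left; apply/existsP; exists i; rewrite i_lt.
- by exists i; rewrite Hi ltnS ltnW.
- by exists t; rewrite ltnS leqnn eqxx.
Qed.

Lemma served_self (t : 'I_T) : served t (s t) = false.
Proof.
by apply/existsP => -[i /andP [i_lt /eqP/s_inj Ei]]; rewrite Ei ltnn in i_lt.
Qed.

Lemma served_all (w : V) : served T w = is_source s w.
Proof. by apply: eq_existsb => t; rewrite ltn_ord. Qed.

Lemma netout_source (z : E -> R) (t : 'I_T) : netout z (s t) = outflow z (s t).
Proof. by rewrite /netout big_pred0 ?subr0 // => e; apply/negbTE/s_no_in. Qed.

Lemma alg_run_served (X : nat -> E -> R) : alg_run s X -> forall n, (n <= T)%N ->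
  (forall e, 0 <= X n e) /\ forall w, w != tau -> netout (X n) w = (served n w)%:R.
Proof.
case=> X0 Hphase; elim=> [_|n IH n_lt].
  split=> [e|w _]; first by rewrite X0.
  by rewrite served0 /netout /outflow !big1 ?subrr // => e _; rewrite X0 ?mulr0.
pose t := Ordinal n_lt.
have [Xn_ge0 Xn_net] := IH (ltnW n_lt).
have [Y_ge0 Y_net Y_out1 Y_out] := phase_spec (Hphase t) Xn_ge0.
rewrite /= in Y_ge0 Y_net Y_out1 Y_out.
split=> // w wNt; rewrite (servedS t).
have [->|wNs] := eqVneq w (s t); last by rewrite orbF Y_net // Xn_net.
rewrite orbT netout_source; case: Y_out => [EY|Y_le1]; last exact/le_anti/andP.
by move: Y_out1; rewrite EY -netout_source Xn_net // (served_self t) ler10.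
Qed.

Lemma alg_run_valid (X : nat -> E -> R) : alg_run s X ->
  (forall e, 0 <= X T e) /\ forall w, w != tau -> netout (X T) w = demand s w.
Proof.
move=> /alg_run_served /(_ T (leqnn T)) [X_ge0 X_net]; split=> // w wNt.
by rewrite X_net // served_all /demand; case: is_source.
Qed.

Lemma sum_demand (F : V -> R) : \sum_w F w * demand s w = \sum_t F (s t).
Proof.
have demandE w : demand s w = \sum_t (s t == w)%:R.
  rewrite /demand /is_source; case: existsP => [[i /eqP <-]|no_src].
    by under eq_bigr do rewrite (inj_eq s_inj) eq_sym; rewrite sumr_delta.
  by rewrite big1 // => t _; case: eqP => // Est; case: no_src; exists t; apply/eqP.
under eq_bigr do rewrite demandE mulr_sumr.
rewrite exchange_big /=; apply: eq_bigr => t _.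
by under eq_bigr do rewrite mulr_natr; rewrite sumr_delta.
Qed.

Lemma sources_potential_le_cost (x y : E -> R) (eps : R) :
  0 < eps -> (forall e : E, (0 < gcap e)%E) ->
  (forall e, 0 <= x e) -> (forall w, w != tau -> netout x w = demand s w) ->
  valid s (scaled_cap eps) y ->
  eps / (1 + eps) * \sum_t potential x (s t) <= flow_cost y.
Proof.
move=> eps_gt0 mu_gt0 x_ge0 x_net [y_ge0 y_cap y_net].
have eps1_gt0 : 0 < 1 + eps by rewrite addr_gt0.
have inv_gt0 : 0 < (1 + eps)^-1 by rewrite invr_gt0.
pose g := res_split (fun e => y e - (1 + eps)^-1 * x e).
have g_present r : 0 < g r -> present predT x r.
  apply: res_split_present => e; rewrite ?subr_gt0 ?subr_lt0 => lt_xy.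
    move: (y_cap e) (mu_gt0 e); rewrite /scaled_cap.
    case: (gcap e) => [m| |] //= y_le _; last exact: ltry.
    rewrite lte_fin -(ltr_pM2l inv_gt0) (lt_le_trans lt_xy) // mulrC.
    by rewrite -lee_fin EFinM.
  by have := le_lt_trans (y_ge0 e) lt_xy; rewrite pmulr_rgt0.
have g_net w : w != tau -> rnet g w = eps / (1 + eps) * demand s w.
  move=> wNt; rewrite rnet_res_split netout_sub_scale y_net // x_net //.
  by field; rewrite gt_eqF.
have g_cost : rcost_of g <= flow_cost y.
  rewrite /rcost_of /flow_cost sum_residual; apply: ler_sum => e _.
  rewrite /g /res_split /rcost /= mul0r addr0 ler_wpM2l ?(ltW (cost_gt0 e)) //.
  case: ifP => _; last exact: y_ge0.
  by rewrite lerBlDr lerDl mulr_ge0 ?x_ge0 ?(ltW inv_gt0).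
have g_ge0 r : 0 <= g r by apply: res_split_ge0.
have <- : \sum_w potential x w * rnet g w = eps / (1 + eps) * \sum_t potential x (s t).
  rewrite -sum_demand mulr_sumr; apply: eq_bigr => w _.
  have [->|wNt] := eqVneq w tau; first by rewrite potential_sink !mul0r mulr0.
  by rewrite g_net // mulrCA.
exact: le_trans (potential_weak_duality g_ge0 g_present) g_cost.
Qed.

End Run.

End GeneralizedFlowDuality.

Theorem lemma4 (R : realType) (G : gf_instance R) (T : nat) (s : 'I_T -> gV G)
    (B : R) (eps : R) (Cstar : R) (X : nat -> gE G -> R) (h : 'I_T -> R) :
  instance_ok s B ->
  0 < eps ->
  is_min_cost s (@scaled_cap R G eps) Cstar ->
  alg_run s X ->
  (forall t : 'I_T, is_height (X T) (s t) (h t)) ->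
  \sum_(t < T) h t <= (1 + eps) / eps * Cstar.
Proof.
move=> [_ [s_inj s_ne_sink s_no_in] edge_pos dummy _] eps_gt0 [[y [y_valid <-]] _].
move=> run height.
have gain_gt0 (e : gE G) : 0 < ggain e by case: (edge_pos e) => _ [].
have cost_gt0 (e : gE G) : 0 < gcost e by case: (edge_pos e) => _ [].
have sink_reachable v : v != gsink G ->
    exists e : gE G, [/\ gsrc e = v, gtgt e = gsink G & gcap e = +oo%E].
  by move=> /dummy [e [? ? ? _ _]]; exists e.
have [x_ge0 x_net] := alg_run_valid gain_gt0 s_inj s_ne_sink s_no_in run.
have h_le t : h t <= potential (X T) (s t).
  apply: aug_lb_le_potential gain_gt0 cost_gt0 sink_reachable _ _ _ (s_ne_sink t) _.
  exact: (height t).2.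
have := sources_potential_le_cost gain_gt0 cost_gt0 sink_reachable s_inj eps_gt0
  (fun e => (edge_pos e).1) x_ge0 x_net y_valid.
rewrite -ler_pdivlMl ?divr_gt0 ?addr_gt0 // invf_div => le_pot.
by apply: le_trans le_pot; apply: ler_sum => t _; apply: h_le.
Qed.
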